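(* Let $n\geq 2$ and let $\mu_0^n$ be the complex commutative associative algebra with basis $\{e_1,\dots,e_n\}$ and multiplication $e_i\cdot e_j=e_{i+j}$ if $2\leq i+j\leq n$, all other products of basis elements being zero. Let $[-,-]$ be a bilinear operation on $\mu_0^n$ such that $(\mu_0^n,\cdot,[-,-])$ is a transposed Poisson algebra. Then there exist $\alpha_2,\dots,\alpha_n\in\mathbb{C}$ such that \[ [e_i,e_j]=(j-i)\sum_{t=i+j-1}^{n}\alpha_{t-i-j+3}\,e_t\quad\text{for } 3\leq i+j\leq n+1, \] and all other brackets of basis elements are zero. (This algebra is denoted $\mathbf{TP}(\alpha_2,\dots,\alpha_n)$.)
   Context: A transposed Poisson algebra is a triple $(\mathfrak{L},\cdot,[-,-])$ where $\mathfrak{L}$ is a complex vector space, $(\mathfrak{L},\cdot)$ is a commutative associative algebra, $(\mathfrak{L},[-,-])$ is a Lie algebra, and $2z\cdot[x,y]=[z\cdot x,y]+[x,z\cdot y]$ for all $x,y,z\in\mathfrak{L}$. *)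

From HB Require Import structures.
From mathcomp Require Import all_boot all_order all_algebra.
From mathcomp Require Import complex.
From mathcomp Require Import reals.
Set Implicit Arguments. Unset Strict Implicit. Unset Printing Implicit Defensive.
Import Order.TTheory GRing.Theory Num.Theory.
Local Open Scope ring_scope.

Definition CC (R : realType) := R[i].

(* The underlying vector space of mu_0^n: coordinate rows 'rV[C]_n,
   coordinate m (0-based) being the coefficient of e_(m+1). *)
Definition vecn (R : realType) (n : nat) := 'rV[CC R]_n.

(* Basis vector e_k (1-based); it is 0 when k = 0 or k > n. *)
Definition ebasis (R : realType) (n : nat) (k : nat) : vecn R n :=
  \row_(m < n) (if (m.+1 == k)%N then 1 else 0).

Definition mu0_mul (R : realType) (n : nat) (x y : vecn R n) : vecn R n :=
  \sum_(i < n) \sum_(j < n) ((x 0 i * y 0 j) *: ebasis R n (i.+1 + j.+1)).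

Definition is_TPA_bracket (R : realType) (n : nat)
    (br : vecn R n -> vecn R n -> vecn R n) : Prop :=
  [/\ (forall (a : CC R) x y z, br (a *: x + y) z = a *: br x z + br y z),
      (forall (a : CC R) x y z, br z (a *: x + y) = a *: br z x + br z y),
      (forall x, br x x = 0),
      (forall x y z, br x (br y z) + br y (br z x) + br z (br x y) = 0)
    & (forall x y z, 2%:R *: mu0_mul z (br x y)
                    = br (mu0_mul z x) y + br x (mu0_mul z y)) ].

(* Put v := [e_1, e_2].  For z = e_k the compatibility identity reads
     [e_(i+k), e_j] + [e_i, e_(j+k)] = 2 e_k . [e_i, e_j],
   and the candidate brackets (j - i) e_(i+j-3) . v (with e_0 . v := v) satisfy
   the same identity.  By strong induction on N = p + q, the defects
   d_a := [e_a, e_(N-a)] - (N - 2a) e_(N-3) . v  (0 < a < N)  then satisfy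
   d_a + d_b = 0 whenever a <> b; as soon as N >= 4 there are three distinct
   indices, so 2 d_a = 0.  Finally e_(n+1) = 0 gives
   0 = [e_(n+1), e_1] = -n e_(n-1) . v, so v has no e_1 component, and alpha_s
   is the e_s-coefficient of v. *)

From HB Require Import structures.
From mathcomp Require Import all_boot all_order all_algebra.
From mathcomp Require Import complex reals.
From mathcomp Require Import zify ring.
Set Implicit Arguments. Unset Strict Implicit. Unset Printing Implicit Defensive.
Import Order.TTheory GRing.Theory Num.Theory.
Local Open Scope ring_scope.

Section Mu0.
Variables (R : realType) (n : nat).
Local Notation V := (vecn R n).
Local Notation e := (ebasis R n).

(* The e_k-coefficient, 1-based like [ebasis]; it is 0 for k = 0 and k > n,
   which absorbs the truncated subtractions below (see [coef_shift]). *)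
Definition coef (k : nat) (w : V) : CC R := \sum_(m < n) (m.+1 == k)%:R * w 0 m.

Fact coef_is_linear k : linear (coef k).
Proof.
move=> c x y; rewrite /coef scaler_sumr -big_split; apply: eq_bigr => m _ /=.
by rewrite !mxE mulrDr mulrCA.
Qed.

HB.instance Definition _ k := GRing.isLinear.Build (CC R) V (CC R) _ (coef k)
  (coef_is_linear k).

Lemma coef_ord (m : 'I_n) w : coef m.+1 w = w 0 m.
Proof.
rewrite /coef (bigD1 m) //= eqxx mul1r big1 ?addr0 // => l.
by rewrite eqSS val_eqE => /negbTE ->; rewrite mul0r.
Qed.

Lemma coef0 w : coef 0 w = 0.
Proof. by rewrite /coef big1 // => m _; rewrite mul0r. Qed.

Lemma coef_out k w : (n < k)%N -> coef k w = 0.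
Proof.
move=> ltnk; rewrite /coef big1 // => m _.
by rewrite ltn_eqF ?mul0r // (leq_ltn_trans (ltn_ord m)).
Qed.

Lemma vec_ext x y : (forall k, (0 < k <= n)%N -> coef k x = coef k y) -> x = y.
Proof. by move=> exy; apply/(@rowP (CC R)) => m; rewrite -!coef_ord exy ?ltn_ord. Qed.

Lemma coef_ebasis k j : coef k (e j) = ((0 < k <= n)%N && (k == j))%:R.
Proof.
case: k => [|k]; first by rewrite coef0.
have [ltkn|lenk] := ltnP k n; last by rewrite coef_out.
by rewrite (coef_ord (Ordinal ltkn)) mxE; case: eqP.
Qed.

Lemma ebasis_out k : (n < k)%N -> e k = 0.
Proof.
move=> ltnk; apply: vec_ext => m /andP[_ lemn].
by rewrite coef_ebasis raddf0 ltn_eqF ?andbF // (leq_ltn_trans lemn).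
Qed.

Lemma coef_mu0_mul k x y : (k <= n)%N ->
  coef k (mu0_mul x y) = \sum_(i < n) x 0 i * coef (k - i.+1) y.
Proof.
move=> lekn; rewrite linear_sum; apply: eq_bigr => i _.
rewrite linear_sum [X in _ = _ * X]/coef mulr_sumr; apply: eq_bigr => j _.
rewrite linearZ /= coef_ebasis (_ : (_ && _) = (j.+1 == k - i.+1)%N).
  by rewrite -[_ *: _]/(_ * _); ring.
lia.
Qed.

Lemma coef_mul_ebasis j k y : (0 < j)%N -> (k <= n)%N ->
  coef k (mu0_mul (e j) y) = coef (k - j) y.
Proof.
move=> j_gt0 lekn; rewrite coef_mu0_mul //.
have [lejn|ltnj] := leqP j n.
  have ltj1n : (j.-1 < n)%N by rewrite prednK.
  rewrite (bigD1 (Ordinal ltj1n)) //= big1 ?addr0.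
    by rewrite mxE prednK // eqxx mul1r.
  move=> i; rewrite mxE -val_eqE /=.
  by case: (i.+1 =P j) => [<-|_]; rewrite ?eqxx ?mul0r.
rewrite (_ : k - j = 0)%N ?coef0; last lia.
by rewrite big1 // => i _; rewrite mxE ltn_eqF ?mul0r // (leq_ltn_trans (ltn_ord i)).
Qed.

Lemma mu0_mulZr (c : CC R) (x y : V) : mu0_mul x (c *: y) = c *: mu0_mul x y.
Proof.
rewrite /mu0_mul scaler_sumr; apply: eq_bigr => i _.
by rewrite scaler_sumr; apply: eq_bigr => j _; rewrite mxE scalerA mulrCA.
Qed.

Lemma mul_ebasis j k : (0 < j)%N -> (0 < k)%N -> mu0_mul (e j) (e k) = e (j + k).
Proof.
move=> j_gt0 k_gt0; apply: vec_ext => m /andP[m_gt0 lemn].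
by rewrite coef_mul_ebasis // !coef_ebasis; congr (_%:R); lia.
Qed.

(* Multiplication by e_k in the unitalization, e_0 acting as the unit. *)
Definition shift (k : nat) (w : V) : V := if k is 0 then w else mu0_mul (e k) w.

Lemma coef_shift k w m : (m <= n)%N -> coef m (shift k w) = coef (m - k) w.
Proof. by case: k => [|k] lemn; rewrite ?subn0 // coef_mul_ebasis. Qed.

Lemma mul_ebasis_shift j k w : (0 < j)%N ->
  mu0_mul (e j) (shift k w) = shift (k + j) w.
Proof.
move=> j_gt0; apply: vec_ext => m /andP[_ lemn].
rewrite coef_mul_ebasis // !coef_shift ?(leq_trans (leq_subr j m)) //.
by rewrite subnDA subnAC.
Qed.

Lemma shift_expansion k w : coef 1 w = 0 ->
  shift k w = \sum_(k.+2 <= t < n.+1) coef (t - k) w *: e t.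
Proof.
move=> w1; apply: vec_ext => m /andP[m_gt0 lemn].
rewrite coef_shift // linear_sum.
under eq_bigr do
  rewrite linearZ /= coef_ebasis m_gt0 lemn /= eq_sym -[_ *: _]/(_ * _) mulr_natr mulrb.
rewrite -big_mkcond big_nat1_eq ltnS lemn andbT.
case: leqP => // lemk1.
have [->|->] : (m - k = 0 \/ m - k = 1)%N by lia.
  exact: coef0.
exact: w1.
Qed.

Definition tp_br (v : V) (i j : nat) : V :=
  ((j%:Z - i%:Z)%:~R : CC R) *: shift (i + j - 3) v.

Lemma tp_br_TP v i j k : (0 < i)%N -> (0 < j)%N -> (0 < k)%N ->
  tp_br v (i + k) j + tp_br v i (j + k) = 2%:R *: mu0_mul (e k) (tp_br v i j).
Proof.
move=> i_gt0 j_gt0 k_gt0.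
rewrite /tp_br mu0_mulZr mul_ebasis_shift // scalerA -addnA [(k + j)%N]addnC -scalerDl.
have -> : (j%:Z - (i + k)%:Z)%:~R + ((j + k)%:Z - i%:Z)%:~R =
          2%:R * (j%:Z - i%:Z)%:~R :> CC R.
  by rewrite !rmorphB /= -!pmulrn !natrD; ring.
have [ij3|ij2] := leqP 3 (i + j).
  by congr (_ *: shift _ _); lia.
have [-> ->] : (i = 1 /\ j = 1)%N by lia.
by rewrite subrr mulr0z mulr0 !scale0r.
Qed.

End Mu0.

Lemma eq0_of_pairwise_sum_eq0 (F : numFieldType) (U : lmodType F) (N : nat)
    (d : nat -> U) :
  (3 < N)%N -> (forall a b, (0 < b)%N -> (b < a < N)%N -> d a + d b = 0) ->
  forall a, (0 < a < N)%N -> d a = 0.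
Proof.
move=> N_gt3 d_pair.
have d_opp a b : (0 < a < N)%N -> (0 < b < N)%N -> a != b -> d a = - d b.
  move=> /andP[a_gt0 ltaN] /andP[b_gt0 ltbN]; rewrite neq_ltn => /orP[ltab|ltba].
    by apply/eqP; rewrite -addr_eq0 addrC d_pair // ltab.
  by apply/eqP; rewrite -addr_eq0 d_pair // ltba.
move=> a a_range.
have [b [c [b_range c_range neq_ab neq_ac neq_bc]]] : exists b c,
    [/\ (0 < b < N)%N, (0 < c < N)%N, a != b, a != c & b != c].
  have [->|[->|a_ge3]] : (a = 1 \/ a = 2 \/ 3 <= a)%N by lia.
  - by exists 2%N, 3%N; split; lia.
  - by exists 1%N, 3%N; split; lia.
  - by exists 1%N, 2%N; split; lia.
have : 2%:R *: d a = 0.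
  rewrite scaler_nat mulr2n {1}(d_opp a b) // (d_opp b c) // opprK.
  by rewrite (d_opp a c) // subrr.
by move/eqP; rewrite scaler_eq0 pnatr_eq0 => /eqP.
Qed.

Section TransposedPoissonBracket.
Variables (R : realType) (n : nat) (br : vecn R n -> vecn R n -> vecn R n).
Hypothesis tpa : is_TPA_bracket br.
Local Notation e := (ebasis R n).
Local Notation v := (br (e 1) (e 2)).

Lemma br_alt x : br x x = 0.
Proof. by case: tpa. Qed.

Lemma br_anti x y : br y x = - br x y.
Proof.
case: tpa => brDl brDr _ _ _.
have brD1 a b c : br (a + b) c = br a c + br b c by have := brDl 1 a b c; rewrite !scale1r.
have brD2 a b c : br c (a + b) = br c a + br c b by have := brDr 1 a b c; rewrite !scale1r.
apply/eqP; rewrite -addr_eq0 addrC.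
by have := br_alt (x + y); rewrite brD1 !brD2 !br_alt add0r addr0 => ->.
Qed.

Lemma br0l z : br 0 z = 0.
Proof.
case: tpa => brDl _ _ _ _.
have := brDl 1 0 0 z; rewrite !scale1r !addr0 => brDz.
by apply: (addrI (br 0 z)); rewrite addr0 -brDz.
Qed.

Lemma br_ebasis_TP i j k : (0 < i)%N -> (0 < j)%N -> (0 < k)%N ->
  br (e (i + k)) (e j) + br (e i) (e (j + k)) =
  2%:R *: mu0_mul (e k) (br (e i) (e j)).
Proof.
by case: tpa => _ _ _ _ TP *; rewrite TP !mul_ebasis // ![(k + _)%N]addnC.
Qed.

Lemma br_ebasis p q : (0 < p)%N -> (0 < q)%N -> br (e p) (e q) = tp_br v p q.
Proof.
move: {2}(p + q)%N (erefl (p + q)%N) => N.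
elim/ltn_ind: N p q => N IH p q pqN p_gt0 q_gt0.
have [leN3|ltN3] := leqP N 3.
  have [[-> ->]|[[-> ->]|[-> ->]]] :
    (p = 1 /\ q = 1 \/ p = 1 /\ q = 2 \/ p = 2 /\ q = 1)%N by lia.
  - by rewrite br_alt /tp_br subrr mulr0z scale0r.
  - by rewrite /tp_br /= scale1r.
  - by rewrite br_anti /tp_br /= scaleN1r.
pose d a := br (e a) (e (N - a)) - tp_br v a (N - a).
have d_pair a b : (0 < b)%N -> (b < a < N)%N -> d a + d b = 0.
  move=> b_gt0 /andP[ltba ltaN].
  have [k_gt0 j_gt0] : (0 < a - b)%N /\ (0 < N - a)%N by lia.
  have TP := br_ebasis_TP b_gt0 j_gt0 k_gt0.
  have tpTP := tp_br_TP v b_gt0 j_gt0 k_gt0.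
  have Ea : (b + (a - b) = a)%N by lia.
  have Eb : (N - a + (a - b) = N - b)%N by lia.
  rewrite Ea Eb in TP tpTP.
  have ltbjN : (b + (N - a) < N)%N by lia.
  by rewrite /d addrACA -opprD TP tpTP (IH _ ltbjN b (N - a)%N erefl) // subrr.
have p_range : (0 < p < N)%N by lia.
have /eqP := eq0_of_pairwise_sum_eq0 ltN3 d_pair p_range.
by rewrite /d subr_eq0 -pqN addKn => /eqP.
Qed.

Lemma coef1_br12 : (0 < n)%N -> coef 1 v = 0.
Proof.
move=> n_gt0; have := br_ebasis (ltn0Sn n) (ltn0Sn 0).
rewrite ebasis_out // br0l /tp_br => /(congr1 (coef n)).
rewrite raddf0 linearZ /= coef_shift // (_ : (n - (n.+1 + 1 - 3) = 1)%N); last by lia.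
move/esym/eqP; rewrite mulf_eq0 intr_eq0 => /orP[/eqP|/eqP //]; lia.
Qed.

End TransposedPoissonBracket.

Theorem mainTheorem1 (R : realType) (n : nat) (hn : (2 <= n)%N)
    (br : vecn R n -> vecn R n -> vecn R n) :
  is_TPA_bracket br ->
  exists alpha : nat -> CC R,
    forall i j : nat, (1 <= i <= n)%N -> (1 <= j <= n)%N ->
      br (ebasis R n i) (ebasis R n j) =
      if (3 <= i + j <= n.+1)%N then
        ((j%:Z - i%:Z)%:~R : CC R) *:
          \sum_((i + j).-1 <= t < n.+1) (alpha (t + 3 - (i + j))%N *: ebasis R n t)
      else 0.
Proof.
move=> tpa; exists (fun s => coef s (br (ebasis R n 1) (ebasis R n 2))).
move=> i j /andP[i_gt0 _] /andP[j_gt0 _].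
have [ij2|ij3] := ltnP (i + j)%N 3.
  have [-> ->] : (i = 1 /\ j = 1)%N by lia.
  exact: br_alt.
rewrite (br_ebasis tpa) // /tp_br (shift_expansion _ (coef1_br12 tpa _)); last by lia.
case: leqP => [lenij|ltnij].
  congr (_ *: _); rewrite (_ : (i + j - 3).+2 = (i + j).-1)%N; last by lia.
  by apply: eq_bigr => t _; congr (coef _ _ *: _); lia.
by rewrite big_geq ?scaler0 //; lia.
Qed.
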